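(* Let $T$ be a tree with exactly three pendant vertices $u_1,u_2,u_3$ and let $m$ be its major vertex, with $d(u_1,m)\equiv 0$, $d(u_2,m)\equiv 2$ and $d(u_3,m)\equiv 0\pmod 3$. Then $1$ is an eigenvalue of $L(T)$.
   Context: $L(T)=D(T)-A(T)$ is the Laplacian matrix of $T$. A pendant vertex has degree $1$; a major vertex has degree at least $3$. $d$ denotes distance. *)

From mathcomp Require Import all_boot all_order all_algebra.
Set Implicit Arguments. Unset Strict Implicit. Unset Printing Implicit Defensive.
Import GRing.Theory Num.Theory.

Definition simple_graph (n : nat) (e : rel 'I_n) : Prop :=
  symmetric e /\ irreflexive e.

Definition connected_graph (n : nat) (e : rel 'I_n) : Prop :=
  forall u v : 'I_n, connect e u v.

Definition acyclic_graph (n : nat) (e : rel 'I_n) : Prop :=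
  forall c : seq 'I_n, 2 < size c -> uniq c -> ~~ cycle e c.

Definition is_tree (n : nat) (e : rel 'I_n) : Prop :=
  [/\ simple_graph e, connected_graph e & acyclic_graph e].

Definition deg (n : nat) (e : rel 'I_n) (v : 'I_n) : nat := #|[set w | e v w]|.

Definition pendant (n : nat) (e : rel 'I_n) (v : 'I_n) : bool := deg e v == 1%N.
Definition major (n : nat) (e : rel 'I_n) (v : 'I_n) : bool := (3 <= deg e v)%N.

Definition walk_of_len (n : nat) (e : rel 'I_n) (u v : 'I_n) (k : nat) : Prop :=
  exists p : seq 'I_n, [/\ size p = k, path e u p & last u p = v].

Definition is_dist (n : nat) (e : rel 'I_n) (u v : 'I_n) (k : nat) : Prop :=
  walk_of_len e u v k /\ forall j, (j < k)%N -> ~ walk_of_len e u v j.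

Local Open Scope ring_scope.

Definition degree_mx (R : nzRingType) (n : nat) (e : rel 'I_n) : 'M[R]_n :=
  \matrix_(i, j) (if i == j then (deg e i)%:R else 0).

Definition adjacency_mx (R : nzRingType) (n : nat) (e : rel 'I_n) : 'M[R]_n :=
  \matrix_(i, j) (if e i j then 1 else 0).

Definition laplacian_mx (R : nzRingType) (n : nat) (e : rel 'I_n) : 'M[R]_n :=
  degree_mx R e - adjacency_mx R e.

From mathcomp Require Import all_boot all_order all_algebra.
From mathcomp Require Import zify.
Set Implicit Arguments. Unset Strict Implicit. Unset Printing Implicit Defensive.
Import GRing.Theory.

(* Root the tree at the major vertex m.  Counting children (every vertex but m has exactly
   one parent, so the numbers of children add up to n - 1) shows that T is a spider: m has
   three children, the leaves none and every other vertex exactly one, so T consists of three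
   paths hanging from m.  Along a path, (L x)_v = x_v says x_child = x_v - x_parent, whose
   solutions are 6-periodic; taking x = 1, 1, 0, -1, -1, 0, ... from m down the legs of u1 and
   u3, and the same sequence shifted by one down the leg of u2, the equation also holds at m
   (3 - 1 - 1 - 0 = 1), and at a leaf u it holds iff x vanishes at the parent of u, which is
   exactly what the congruences on d(u, m) say. *)

Section Walks.
Variables (n : nat) (e : rel 'I_n).

Fixpoint walkb k (u v : 'I_n) : bool :=
  if k is k'.+1 then [exists w, e u w && walkb k' w v] else u == v.

Lemma walkbS k u v : walkb k.+1 u v = [exists w, e u w && walkb k w v].
Proof. by []. Qed.

Lemma walkbP k u v : reflect (walk_of_len e u v k) (walkb k u v).
Proof.
elim: k u => [|k IH] u /=.
  apply: (iffP eqP) => [->|[p [sp _ lp]]]; first by exists [::].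
  by move: sp lp; case: p.
apply: (iffP existsP) => [[w /andP[euw /IH [p [sp pp lp]]]]|[[|w p] [sp pp lp]]] //.
  by exists (w :: p); rewrite /= sp euw pp lp.
move: pp => /= /andP[euw pp]; exists w; rewrite euw /=; apply/IH.
by exists p; split => //; case: sp.
Qed.

Lemma walkb_path u p : path e u p -> walkb (size p) u (last u p).
Proof. by move=> pp; apply/walkbP; exists p. Qed.

Lemma walkbD a b u v w : walkb a u v -> walkb b v w -> walkb (a + b) u w.
Proof.
elim: a u => [|a IH] u /=; first by move/eqP->.
move=> /existsP[x /andP[eux hx]] hb; apply/existsP; exists x.
by rewrite eux (IH _ hx hb).
Qed.

Lemma walkb_split u p1 z p2 : path e u (p1 ++ z :: p2) ->
  walkb (size p1).+1 u z /\ walkb (size p2) z (last z p2).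
Proof.
rewrite -cat_rcons cat_path last_rcons => /andP[/walkb_path + /walkb_path].
by rewrite size_rcons last_rcons.
Qed.

Lemma acyclic_avoiding_walk x a p : acyclic_graph e ->
  e x a -> path e a p -> e (last a p) x -> x \notin a :: p -> last a p = a.
Proof.
move=> eacyc exa pap elx xn; apply/eqP/negPn/negP => nal.
case: (shortenP pap) elx nal => p' pp' up' sub elx nal.
have : cycle e [:: x, a & p'] by rewrite /= exa rcons_path pp' elx.
apply/negP/eacyc; first by case: p' {pp' up' sub elx} nal => //=; rewrite eqxx.
rewrite cons_uniq up' andbT; apply: contra xn.
by rewrite !inE => /orP[->|/sub ->]; rewrite ?orbT.
Qed.

Hypothesis esym : symmetric e.

Lemma walkbSr k u v : walkb k.+1 u v = [exists w, walkb k u w && e w v].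
Proof.
elim: k u => [|k IH] u.
  apply/existsP/existsP => [[w /andP[euw /eqP <-]]|[w /andP[/eqP <- ewv]]].
    by exists u; rewrite /= eqxx.
  by exists v; rewrite /= ewv eqxx.
rewrite walkbS (eq_existsb (fun w => congr1 (andb _) (IH w))).
apply/existsP/existsP => [[w /andP[euw /existsP[x /andP[hx exv]]]]|[x /andP[hx exv]]].
  by exists x; rewrite exv andbT; apply/existsP; exists w; apply/andP.
case/existsP: hx => w /andP[euw hx].
by exists w; rewrite euw; apply/existsP; exists x; apply/andP.
Qed.

Lemma walkb_sym k u v : walkb k u v = walkb k v u.
Proof.
elim: k u v => [|k IH] u v; first by rewrite /= eq_sym.
rewrite walkbSr walkbS; apply/existsP/existsP => [[w /andP[hw ewv]]|[w /andP[evw hw]]].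
  by exists w; rewrite esym ewv IH hw.
by exists w; rewrite IH hw esym evw.
Qed.

End Walks.

Lemma sum_leq_eq (I : finType) (F G : I -> nat) :
  (forall i, F i <= G i) -> \sum_i G i <= \sum_i F i -> forall i, F i = G i.
Proof.
move=> leFG leGF i; apply/eqP; rewrite eqn_leq leFG /=.
have := @leq_sum _ (index_enum I) (fun j => j != i) _ _ (fun j _ => leFG j).
by move: leGF; rewrite (bigD1 i) //= [X in _ <= X](bigD1 i) //=; lia.
Qed.

Section LaplacianRow.
Local Open Scope ring_scope.
Variables (R : nzRingType) (n : nat) (e : rel 'I_n).

Lemma mulmx_laplacian (x : 'rV[R]_n) j :
  (x *m laplacian_mx R e) 0 j = x 0 j *+ deg e j - \sum_(i | e i j) x 0 i.
Proof.
rewrite mxE /laplacian_mx; under eq_bigr => i _ do rewrite !mxE mulrBr.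
rewrite sumrB (bigD1 j) //= eqxx big1 => [|i /negbTE->]; last by rewrite mulr0.
rewrite addr0 mulr_natr; congr (_ - _); rewrite [RHS]big_mkcond; apply: eq_bigr => i _.
by case: (e i j); rewrite ?mulr1 ?mulr0.
Qed.

End LaplacianRow.

Section Eig1Seq.
Local Open Scope ring_scope.
Variable R : nzRingType.

(* 1, 1, 0, -1, -1, 0, ...: the recurrence is the equation (L x)_v = x_v at a vertex of degree 2. *)
Fixpoint eig1_seq (t : nat) : R :=
  if t is t'.+1 then (if t' is t''.+1 then eig1_seq t' - eig1_seq t'' else 1) else 1.

Lemma eig1_seqSS t : eig1_seq t.+2 = eig1_seq t.+1 - eig1_seq t.
Proof. by []. Qed.

Lemma eig1_seq_add3 t : eig1_seq (t + 3) = - eig1_seq t.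
Proof. by rewrite addn3 !eig1_seqSS addrAC subrr add0r. Qed.

Lemma eig1_seq_mod3_eq2 t : (t %% 3 = 2)%N -> eig1_seq t = 0.
Proof.
move=> t3; rewrite (divn_eq t 3) t3; elim: (t %/ 3)%N => [|q IH]; first by rewrite /= subrr.
by rewrite (_ : q.+1 * 3 + 2 = q * 3 + 2 + 3)%N ?eig1_seq_add3 ?IH ?oppr0 //; lia.
Qed.

End Eig1Seq.

Section RootedTree.
Variables (n : nat) (e : rel 'I_n) (r : 'I_n).
Hypotheses (esym : symmetric e) (eirr : irreflexive e).
Hypotheses (econn : connected_graph e) (eacyc : acyclic_graph e).

Lemma exists_walk_from_root v : exists k, walkb e k r v.
Proof. by have /connectP[p pp ->] := econn r v; exists (size p); apply: walkb_path. Qed.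

Definition depth v := ex_minn (exists_walk_from_root v).

Lemma depth_walk v : walkb e (depth v) r v.
Proof. by rewrite /depth; case: ex_minnP. Qed.

Lemma depth_min v k : walkb e k r v -> depth v <= k.
Proof. by rewrite /depth; case: ex_minnP => j _; apply. Qed.

Lemma depth_eq0 v : (depth v == 0) = (v == r).
Proof.
apply/idP/idP => [/eqP d0|/eqP->]; last by rewrite -leqn0; apply: depth_min; rewrite /= eqxx.
by have := depth_walk v; rewrite d0 eq_sym.
Qed.

Lemma depth_root : depth r = 0.
Proof. by apply/eqP; rewrite depth_eq0. Qed.

Lemma depth_adj_le v w : e v w -> depth w <= (depth v).+1.
Proof.
move=> evw; rewrite -addn1; apply: depth_min; apply: walkbD (depth_walk v) _.
by rewrite walkbS; apply/existsP; exists w; rewrite evw /= eqxx.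
Qed.

Lemma exists_lower_nbr v : v != r -> exists2 p, e v p & (depth p).+1 = depth v.
Proof.
rewrite -depth_eq0 -lt0n => v_gt0; have := depth_walk v; rewrite walkb_sym //.
case E: (depth v) v_gt0 => [|k] // _; rewrite walkbS => /existsP[p /andP[evp hp]].
exists p => //; rewrite walkb_sym // in hp.
have /depth_adj_le : e p v by rewrite esym.
by have := depth_min hp; lia.
Qed.

(* The two walks to the root from distinct neighbours of [v] would close a cycle through [v]. *)
Lemma lower_nbr_uniq v p q :
  e v p -> e v q -> depth p < depth v -> depth q <= depth v -> p = q.
Proof.
move=> evp evq ltp leq.
have /walkbP[r1 [s1 pr1 lr1]] : walkb e (depth p) p r by rewrite walkb_sym ?depth_walk.
have /walkbP[r2 [s2 pr2 lr2]] := depth_walk q.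
have pr : path e p (r1 ++ r2) by rewrite cat_path pr1 lr1.
have := acyclic_avoiding_walk eacyc evp pr; rewrite last_cat lr1 lr2 esym.
move=> /(_ evq) qp; symmetry; apply: qp.
rewrite inE mem_cat !negb_or; apply/and3P; split.
- by apply: contraTneq ltp => <-; rewrite ltnn.
- apply/negP => v_r1; case/splitPr: v_r1 pr1 s1 lr1 => a b pr1 s1 lr1.
  have [_] := walkb_split pr1; rewrite last_cat /= in lr1.
  rewrite lr1 walkb_sym // => /depth_min.
  by rewrite size_cat /= in s1; lia.
- apply/negP => v_r2; case/splitPr: v_r2 pr2 s2 lr2 => a b pr2 s2 lr2.
  have [/depth_min] := walkb_split pr2; rewrite size_cat /= in s2.
  case: b {pr2} s2 lr2 => [|? b] s2 lr2 dv _; last by rewrite /= in s2; lia.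
  by move: evq; rewrite -lr2 last_cat eirr.
Qed.

Lemma depth_adj v w : e v w -> depth w = (depth v).+1 \/ depth v = (depth w).+1.
Proof.
move=> evw; have le_wv := depth_adj_le evw.
have le_vw : depth v <= (depth w).+1 by apply: depth_adj_le; rewrite esym.
suff: depth v != depth w by move/eqP; lia.
apply/eqP => dvw; case: (eqVneq v r) => [vr|/exists_lower_nbr[p evp dp]].
  have /eqP wr : w == r by rewrite -depth_eq0 -dvw vr depth_root.
  by move: evw; rewrite vr wr eirr.
have pw := lower_nbr_uniq evp evw (ltac:(lia)) (ltac:(lia)).
by move: dp; rewrite pw dvw; lia.
Qed.

Definition parent v := odflt v [pick w | e v w && (depth w < depth v)].

Lemma parent_spec v : v != r -> e v (parent v) /\ (depth (parent v)).+1 = depth v.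
Proof.
move=> vr; rewrite /parent; case: pickP => [w /andP[evw ltw]|none] /=.
  by split => //; have := depth_adj evw; lia.
have [p evp dp] := exists_lower_nbr vr.
by have := none p; rewrite evp -dp ltnSn.
Qed.

Lemma parent_root : parent r = r.
Proof. by rewrite /parent; case: pickP => [w /andP[_]|] //; rewrite depth_root. Qed.

Lemma depth_parent v : depth (parent v) = (depth v).-1.
Proof.
case: (eqVneq v r) => [->|vr]; first by rewrite parent_root depth_root.
by have [_ <-] := parent_spec vr.
Qed.

Lemma parent_eq v w : e v w -> depth w < depth v -> parent v = w.
Proof.
move=> evw ltw; have vr : v != r by rewrite -depth_eq0; lia.
have [evp dp] := parent_spec vr; apply: lower_nbr_uniq evp evw _ _; lia.
Qed.

Definition children v := [set w | e v w & depth v < depth w].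
Definition parent_set v := [set w | e v w & depth w < depth v].

Lemma in_children v w : (w \in children v) = (w != r) && (parent w == v).
Proof.
rewrite inE; apply/andP/andP => [[evw ltv]|[wr /eqP <-]].
  have dw : depth w = (depth v).+1 by have := depth_adj evw; lia.
  have -> : parent w = v by apply: parent_eq; [rewrite esym | lia].
  by rewrite -depth_eq0 dw eqxx.
by have [ewp <-] := parent_spec wr; rewrite esym ewp.
Qed.

Lemma depth_child v w : w \in children v -> depth w = (depth v).+1.
Proof. by rewrite in_children => /andP[/parent_spec[_ <-] /eqP->]. Qed.

Lemma parent_setE v : parent_set v = if v == r then set0 else [set parent v].
Proof.
apply/setP => w; case: eqVneq => [->|vr]; rewrite !inE.
  by rewrite depth_root ltn0 andbF.
have [evp dp] := parent_spec vr.
apply/andP/eqP => [[evw ltw]|->]; first by rewrite (parent_eq evw ltw).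
by rewrite -dp ltnSn.
Qed.

Lemma nbrs_children_parent v : [set w | e v w] = children v :|: parent_set v.
Proof.
apply/setP => w; rewrite !inE -andb_orr; case evw: (e v w) => //=.
by have := depth_adj evw; case: ltngtP; lia.
Qed.

Lemma disjoint_children_parent v : [disjoint children v & parent_set v].
Proof.
by rewrite -setI_eq0; apply/eqP/setP => w; rewrite !inE; case: ltngtP; rewrite ?andbF.
Qed.

Lemma deg_children v : deg e v = #|children v| + (v != r).
Proof.
rewrite /deg nbrs_children_parent cardsU disjoint_setI0 ?disjoint_children_parent //.
rewrite cards0 subn0 parent_setE.
by case: eqVneq; rewrite ?cards0 ?cards1.
Qed.

Lemma sum_card_children : \sum_v #|children v| = n.-1.
Proof.
under eq_bigr => v _ do rewrite -sum1_card big_mkcond.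
rewrite exchange_big /= -[n in RHS]card_ord -(cardC1 r) -sum1_card [RHS]big_mkcond.
apply: eq_bigr => w _; rewrite inE.
under eq_bigr => v _ do rewrite in_children.
case: eqVneq => [_|wr] /=; first by rewrite big1.
by rewrite -big_mkcond /= (big_pred1 (parent w)) // => v; rewrite eq_sym.
Qed.

Lemma is_dist_depth u k : is_dist e u r k -> depth u = k.
Proof.
move=> [/walkbP wk kmin]; rewrite walkb_sym // in wk.
apply/eqP; rewrite eqn_leq depth_min //= leqNgt; apply/negP => ltk.
by apply: (kmin _ ltk); apply/walkbP; rewrite walkb_sym ?depth_walk.
Qed.

Definition ancestor v w := iter (depth w - depth v) parent w == v.

Lemma depth_iter_parent k w : depth (iter k parent w) = depth w - k.
Proof. by elim: k => [|k IH]; rewrite ?subn0 // iterS depth_parent IH subnS. Qed.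

Lemma ancestor_root w : ancestor r w.
Proof.
by rewrite /ancestor depth_root subn0 -depth_eq0 depth_iter_parent subnn.
Qed.

Lemma ancestor_depth_inj v v' w :
  ancestor v w -> ancestor v' w -> depth v = depth v' -> v = v'.
Proof. by move=> /eqP av /eqP av' dvv'; rewrite -av dvv'. Qed.

Lemma ancestor_child v c w : c \in children v -> ancestor c w -> ancestor v w.
Proof.
move=> cv /eqP ac; have dc := depth_child cv.
have := depth_iter_parent (depth w - depth c) w; rewrite ac => dcw.
rewrite /ancestor (_ : depth w - depth v = (depth w - depth c).+1); last by lia.
by rewrite iterS ac; move: cv; rewrite in_children => /andP[].
Qed.

Lemma ancestor_proper v w :
  ancestor v w -> v != w -> exists2 c, c \in children v & ancestor c w.
Proof.
move=> /eqP av vw; have := depth_iter_parent (depth w - depth v) w; rewrite av => dv.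
case E: (depth w - depth v) av => [|k] av; first by rewrite -av eqxx in vw.
have dz := depth_iter_parent k w.
exists (iter k parent w); last by rewrite /ancestor dz; apply/eqP; congr iter; lia.
by rewrite in_children -depth_eq0 dz -iterS av eqxx andbT; lia.
Qed.

Lemma sum_nbrs (V : nmodType) (F : 'I_n -> V) j :
  (\sum_(i | e i j) F i = \sum_(i in children j) F i + \sum_(i in parent_set j) F i)%R.
Proof.
rewrite -bigU ?disjoint_children_parent //; apply: eq_bigl => i.
by have /setP/(_ i) := nbrs_children_parent j; rewrite !inE esym.
Qed.

Section Spider.
Variables u1 u2 u3 : 'I_n.
Hypothesis leaves_uniq : uniq [:: u1; u2; u3].
Hypothesis pendantE : forall v, pendant e v = (v \in [:: u1; u2; u3]).
Hypothesis root_major : major e r.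

Lemma root_notin_leaves : r \notin [:: u1; u2; u3].
Proof.
rewrite -pendantE /pendant; move: root_major; rewrite /major.
by case: (deg e r) => [|[|]].
Qed.

Lemma leaf_neq_root u : u \in [:: u1; u2; u3] -> u != r.
Proof. by apply: contraTneq => ->; rewrite (negbTE root_notin_leaves). Qed.

Definition spider_arity v := if v == r then 3 else if v \in [:: u1; u2; u3] then 0 else 1.

Lemma spider_arity_le v : spider_arity v <= #|children v|.
Proof.
rewrite /spider_arity; case: eqVneq => [->|vr].
  by move: root_major; rewrite /major deg_children eqxx addn0.
case: ifP => // vL; have := pendantE v; rewrite vL /pendant deg_children vr.
by case: #|children v|.
Qed.

Lemma sum_spider_arity : \sum_v spider_arity v = n.-1.
Proof.
have n_gt0 : 0 < n by case: (n) r => [[]|].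
have sum_leaves : \sum_v ((v \in [:: u1; u2; u3]) : nat) = 3.
  rewrite -[3]/(size [:: u1; u2; u3]) -(card_uniqP leaves_uniq) -sum1_card.
  by rewrite [RHS]big_mkcond; apply: eq_bigr => v _; case: (_ \in _).
have : \sum_v (spider_arity v + (v \in [:: u1; u2; u3])) = \sum_v (1 + (v == r) * 2) :> nat.
  apply: eq_bigr => v _; rewrite /spider_arity; case: eqVneq => [->|_].
    by rewrite (negbTE root_notin_leaves).
  by case: (_ \in _).
have sum_root : \sum_v ((v == r) * 2) = 2 by rewrite (bigD1 r) //= eqxx big1 // => v /negbTE->.
by rewrite !big_split /= sum_leaves sum_root sum1_card card_ord; lia.
Qed.

Lemma card_children_spider v : #|children v| = spider_arity v.
Proof.
symmetry; apply: (sum_leq_eq spider_arity_le).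
by rewrite sum_card_children sum_spider_arity.
Qed.

Lemma card_children_root : #|children r| = 3.
Proof. by rewrite card_children_spider /spider_arity eqxx. Qed.

Lemma children_leaf u : u \in [:: u1; u2; u3] -> children u = set0.
Proof.
move=> uL; apply/cards0_eq.
by rewrite card_children_spider /spider_arity uL (negbTE (leaf_neq_root uL)).
Qed.

Lemma children_inner v : v != r -> v \notin [:: u1; u2; u3] -> exists c, children v = [set c].
Proof.
move=> vr vL; apply/cards1P.
by rewrite card_children_spider /spider_arity (negbTE vr) (negbTE vL).
Qed.

Definition on_u2_leg v := (v != r) && ancestor v u2.

Lemma on_u2_leg_child w c : w != r -> c \in children w -> on_u2_leg c = on_u2_leg w.
Proof.
move=> wr cw; have cr : c != r by move: cw; rewrite in_children => /andP[].
rewrite /on_u2_leg wr cr /=; apply/idP/idP; first exact: ancestor_child.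
have wL : w \notin [:: u1; u2; u3] by apply: contraTN cw => /children_leaf ->; rewrite inE.
have w_u2 : w != u2 by apply: contraNneq wL => ->; rewrite !inE eqxx orbT.
move=> aw; have [c' c'w ac'] := ancestor_proper aw w_u2.
have [z chz] := children_inner wr wL.
by move: cw c'w; rewrite chz !inE => /eqP-> /eqP <-.
Qed.

Lemma on_u2_leg_u2 : on_u2_leg u2.
Proof. by rewrite /on_u2_leg leaf_neq_root ?inE ?eqxx ?orbT //= /ancestor subnn. Qed.

Lemma on_u2_leg_leaf u : u \in [:: u1; u2; u3] -> u != u2 -> on_u2_leg u = false.
Proof.
move=> uL uu2; apply/negP => /andP[_ au].
by have [c] := ancestor_proper au uu2; rewrite children_leaf // inE.
Qed.

Lemma on_u2_leg_root_children :
  exists2 c2, c2 \in children r & forall c, c \in children r -> on_u2_leg c = (c == c2).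
Proof.
have u2r : r != u2 by rewrite eq_sym leaf_neq_root // !inE eqxx orbT.
have [c2 c2r a2] := ancestor_proper (ancestor_root u2) u2r.
exists c2 => // c cr; rewrite /on_u2_leg.
have -> : c != r by move: cr; rewrite in_children => /andP[].
apply/idP/eqP => [ac|->//]; apply: ancestor_depth_inj ac a2 _.
by rewrite (depth_child cr) (depth_child c2r).
Qed.

Hypotheses (depth_u1 : depth u1 %% 3 = 0) (depth_u2 : depth u2 %% 3 = 2).
Hypothesis depth_u3 : depth u3 %% 3 = 0.

Section Eigenvector.
Local Open Scope ring_scope.
Variable R : nzRingType.

Definition spider_eigvec : 'rV[R]_n := \row_v eig1_seq R (depth v + on_u2_leg v).

Lemma spider_eigvecE v : spider_eigvec 0 v = eig1_seq R (depth v + on_u2_leg v).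
Proof. by rewrite mxE. Qed.

(* When [parent v] is the root this relies on eig1_seq 0 = eig1_seq 1. *)
Lemma spider_eigvec_parent v : v != r ->
  spider_eigvec 0 (parent v) = eig1_seq R ((depth v).-1 + on_u2_leg v).
Proof.
move=> vr; rewrite spider_eigvecE depth_parent.
case: (eqVneq (parent v) r) => [pr|pr]; last first.
  by rewrite (@on_u2_leg_child _ v pr) // in_children vr eqxx.
have [_] := parent_spec vr; rewrite pr depth_root /on_u2_leg eqxx => <- /=.
by case: (_ && _).
Qed.

Lemma spider_eigvec_leaf_parent u : u \in [:: u1; u2; u3] ->
  spider_eigvec 0 (parent u) = 0.
Proof.
move=> uL; have ur := leaf_neq_root uL; rewrite spider_eigvec_parent //.
apply: eig1_seq_mod3_eq2; have := ur; rewrite -depth_eq0 -lt0n.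
move: leaves_uniq; rewrite /= !inE !negb_or => /and3P[/andP[u12 u13] u23 _].
move: uL; rewrite !inE => /or3P[] /eqP ->.
- by rewrite on_u2_leg_leaf ?inE ?eqxx //=; lia.
- by rewrite on_u2_leg_u2 /=; lia.
- by rewrite on_u2_leg_leaf ?inE ?eqxx ?orbT // 1?eq_sym //=; lia.
Qed.

Lemma sum_spider_eigvec_root_children :
  \sum_(c in children r) spider_eigvec 0 c = 2%:R.
Proof.
have [c2 c2r branch] := on_u2_leg_root_children.
rewrite (big_setD1 c2) //= spider_eigvecE (depth_child c2r) depth_root (branch _ c2r) eqxx.
under eq_bigr => i /setD1P[ic2 ir] do
  rewrite spider_eigvecE (depth_child ir) depth_root (branch _ ir) (negbTE ic2).
have := cardsD1 c2 (children r); rewrite c2r card_children_root => -[]; rewrite add0n => cardD.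
by rewrite sumr_const -cardD /= subrr add0r.
Qed.

Lemma spider_eigvec_fixed : spider_eigvec *m laplacian_mx R e = spider_eigvec.
Proof.
apply/rowP => j; rewrite mulmx_laplacian sum_nbrs parent_setE deg_children.
case: eqVneq => [->|jr].
  rewrite big_set0 addr0 card_children_root addn0 spider_eigvecE depth_root.
  by rewrite /on_u2_leg eqxx sum_spider_eigvec_root_children -natrB.
rewrite big_set1; case jL: (j \in [:: u1; u2; u3]).
  by rewrite spider_eigvec_leaf_parent // children_leaf // big_set0 cards0 add0r subr0.
have [c chj] := children_inner jr (negbT jL).
have cj : c \in children j by rewrite chj inE.
rewrite chj big_set1 cards1 spider_eigvec_parent // !spider_eigvecE (on_u2_leg_child jr cj).
rewrite (depth_child cj); have : (0 < depth j)%N by rewrite lt0n depth_eq0.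
case: (depth j) => [|d] // _; rewrite !addSn eig1_seqSS /=.
by rewrite subrK mulr2n addrK.
Qed.

End Eigenvector.

Lemma spider_laplacian_eigenvalue1 (F : fieldType) : eigenvalue (laplacian_mx F e) 1%R.
Proof.
apply/eigenvalueP; exists (spider_eigvec F); first by rewrite scale1r spider_eigvec_fixed.
apply/eqP => /rowP/(_ r); rewrite spider_eigvecE mxE depth_root /on_u2_leg eqxx /=.
exact/eqP/oner_neq0.
Qed.

End Spider.
End RootedTree.

Local Open Scope ring_scope.

Theorem mainTheorem7 (R : realFieldType) (n : nat) (e : rel 'I_n)
    (u1 u2 u3 m : 'I_n) (k1 k2 k3 : nat) :
  is_tree e ->
  uniq [:: u1; u2; u3] ->
  (forall v : 'I_n, pendant e v = (v \in [:: u1; u2; u3])) ->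
  major e m ->
  is_dist e u1 m k1 -> is_dist e u2 m k2 -> is_dist e u3 m k3 ->
  (k1 %% 3 = 0)%N -> (k2 %% 3 = 2)%N -> (k3 %% 3 = 0)%N ->
  eigenvalue (laplacian_mx R e) 1.
Proof.
move=> [[esym eirr] econn eacyc] leaves_uniq pendantE m_major d1 d2 d3 k1_3 k2_3 k3_3.
apply: (spider_laplacian_eigenvalue1 (econn := econn) esym eirr eacyc leaves_uniq pendantE m_major).
- by rewrite (is_dist_depth esym econn d1).
- by rewrite (is_dist_depth esym econn d2).
- by rewrite (is_dist_depth esym econn d3).
Qed.
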